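(* Let $\mathcal I_{CAS}=\langle\mathcal I,\chi\rangle$ be a CAS-model of a DL-Lite$_R$ DKB $\mathcal K$ such that $\mathit{uni}_{\mathcal K}(\mathcal I_{CAS})=\{e_1,\dots,e_m\}$. Let $c_1,\dots,c_m$ be fresh individual names and $A$ a fresh concept name. Then $\mathcal I'_{CAS}=\langle\mathcal I',\chi\rangle$, where $\mathcal I'$ agrees with $\mathcal I$ except that $c_i^{\mathcal I'}=e_i$ for $i=1,\dots,m$ and $A^{\mathcal I'}=\{e_1,\dots,e_m\}$, is a CAS-model of $\mathcal K'=\mathcal K\cup\{A(c_1),\dots,A(c_m)\}$.
   Context: DL-Lite$_R$: pairwise disjoint countably infinite sets $\mathrm{NC}$, $\mathrm{NR}$, $\mathrm{NI}$; a role is $R$ or $R^-$; concepts $C ::= A\mid\exists R$ (left), $D ::= A\mid\neg C\mid\exists R$ (right). Axioms: $C\sqsubseteq D$, $S\sqsubseteq R$, $\mathrm{Dis}(R,S)$, $\mathrm{Inv}(R,S)$, $\mathrm{Irr}(R)$ (no reflexivity), assertions $D(a)$, $R(a,b)$, usual semantics. Standard name assumption: an infinite set $\mathrm{NI}_S\subseteq\mathrm{NI}$ of standard names is the domain of every interpretation, $c^{\mathcal I}=c$ for $c\in\mathrm{NI}_S$. Axioms are identified with universal first-order sentences $\forall\vec x\,\phi_\alpha(\vec x)$ via the standard translation with right-hand existentials Skolemized; $\alpha(\vec e):=\phi_\alpha(\vec e)$. A DKB $\mathcal K$ is a finite set of DL-Lite$_R$ axioms and defeasible axioms $\mathrm D(\alpha)$;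 $N_{\mathcal K}$ its individuals. A clashing assumption is a pair $\langle\alpha,\vec e\rangle$ with $\alpha(\vec e)$ an instantiation. $\langle\mathcal I,\chi\rangle$ ($\chi$ a set of clashing assumptions) is a CAS-model of $\mathcal K$ if $\mathcal I$ satisfies the non-defeasible axioms of $\mathcal K$ and $\mathcal I\models\phi_\alpha(\vec d)$ for all $\mathrm D(\alpha)\in\mathcal K$ and tuples $\vec d$ with $\langle\alpha,\vec d\rangle\notin\chi$. $\mathit{uni}_{\mathcal K}(\langle\mathcal I,\chi\rangle)=\{e\mid e \text{ occurs in some }\langle\alpha,\vec e\rangle\in\chi\}\setminus\{c^{\mathcal I}\mid c\in N_{\mathcal K}\}$ (elements in clashing assumptions not named by $\mathcal K$). *)

From Stdlib Require Import List Arith.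
Import ListNotations.
Set Implicit Arguments.

Definition NC := nat.
Definition NR := nat.
Definition NI := nat.

Inductive role := RN (r : NR) | RInv (r : NR).
(* Left-hand concepts C ::= A | exists R *)
Inductive lconcept := LAt (a : NC) | LEx (R : role).
(* Right-hand concepts D ::= A | not C | exists R *)
Inductive rconcept := RAt (a : NC) | RNeg (C : lconcept) | REx (R : role).

Inductive dl_axiom :=
| CIncl (C : lconcept) (D : rconcept)
| RIncl (S R : role)
| Dis (R S : role)
| Inv (R S : role)
| Irr (R : role)
| CAss (D : rconcept) (a : NI)
| RAss (R : NR) (a b : NI).

Inductive dkb_item := Strict (a : dl_axiom) | Defeasible (a : dl_axiom).
Definition DKB := list dkb_item.

Definition item_axiom (i : dkb_item) : dl_axiom :=
  match i with Strict a => a | Defeasible a => a end.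

Definition ax_inds (al : dl_axiom) : list NI :=
  match al with CAss _ a => [a] | RAss _ a b => [a; b] | _ => [] end.
Definition dkb_inds (K : DKB) : list NI :=
  flat_map (fun i => ax_inds (item_axiom i)) K.

Definition lc_names (C : lconcept) : list NC :=
  match C with LAt a => [a] | LEx _ => [] end.
Definition rc_names (D : rconcept) : list NC :=
  match D with RAt a => [a] | RNeg C => lc_names C | REx _ => [] end.
Definition ax_cnames (al : dl_axiom) : list NC :=
  match al with
  | CIncl C D => lc_names C ++ rc_names D
  | CAss D _ => rc_names D
  | _ => []
  end.
Definition dkb_cnames (K : DKB) : list NC :=
  flat_map (fun i => ax_cnames (item_axiom i)) K.

(* Standard name assumption: the domain is the set std of standard names. *)
Definition dom (std : NI -> Prop) := {x : NI | std x}.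

Record interp (std : NI -> Prop) := {
  ind : NI -> dom std;
  ind_std : forall c (h : std c), proj1_sig (ind c) = c;
  cext : NC -> dom std -> Prop;
  rext : NR -> dom std -> dom std -> Prop
}.

Definition role_i std (I : interp std) (R : role) (d e : dom std) : Prop :=
  match R with RN r => rext I r d e | RInv r => rext I r e d end.
Definition lc_i std (I : interp std) (C : lconcept) (d : dom std) : Prop :=
  match C with LAt a => cext I a d | LEx R => exists e, role_i I R d e end.
Definition rc_i std (I : interp std) (D : rconcept) (d : dom std) : Prop :=
  match D with
  | RAt a => cext I a d
  | RNeg C => ~ lc_i I C d
  | REx R => exists e, role_i I R d e
  end.

(* Number of universally quantified variables of the FO translation
   (right-hand existentials Skolemized, hence not counted). *)
Definition arity (al : dl_axiom) : nat :=
  match al with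
  | CIncl _ _ => 1 | RIncl _ _ => 2 | Dis _ _ => 2 | Inv _ _ => 2 | Irr _ => 1
  | CAss _ _ => 0 | RAss _ _ _ => 0
  end.

Definition inst std (I : interp std) (al : dl_axiom) (es : list (dom std)) : Prop :=
  match al, es with
  | CIncl C D, [x] => lc_i I C x -> rc_i I D x
  | RIncl R1 R, [x; y] => role_i I R1 x y -> role_i I R x y
  | Dis R R2, [x; y] => ~ (role_i I R x y /\ role_i I R2 x y)
  | Inv R R2, [x; y] => (role_i I R x y <-> role_i I R2 y x)
  | Irr R, [x] => ~ role_i I R x x
  | CAss D a, [] => rc_i I D (ind I a)
  | RAss R a b, [] => rext I R (ind I a) (ind I b)
  | _, _ => True
  end.

Definition sat std (I : interp std) (al : dl_axiom) : Prop :=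
  forall es, length es = arity al -> inst I al es.

Definition CA std := (dl_axiom * list (dom std))%type.
Definition wf_ca std (p : CA std) : Prop := length (snd p) = arity (fst p).

Definition CAS_model std (K : DKB) (I : interp std) (chi : CA std -> Prop) : Prop :=
  (forall p, chi p -> wf_ca p) /\
  (forall al, In (Strict al) K -> sat I al) /\
  (forall al, In (Defeasible al) K ->
     forall es, length es = arity al -> ~ chi (al, es) -> inst I al es).

Definition uni std (K : DKB) (I : interp std) (chi : CA std -> Prop) (e : dom std) : Prop :=
  (exists al es, chi (al, es) /\ In e es) /\
  ~ (exists c, In c (dkb_inds K) /\ ind I c = e).

Definition extend_dkb (K : DKB) (A : NC) (cs : list NI) : DKB :=
  K ++ map (fun c => Strict (CAss (RAt A) c)) cs.

(* I' differs from I only on the fresh concept name A and the fresh individuals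
   c_i, none of which occurs in K; so every axiom of K has exactly the same
   instances in I and I', and the new assertions A(c_i) hold because
   c_i^I' = e_i belongs to A^I'. *)
From Stdlib Require Import List Arith.
Import ListNotations.

Section Agreement.

Context {std : NI -> Prop}.
Variables I I' : interp std.
Hypothesis same_roles : rext I' = rext I.

Lemma role_i_agree R d e : role_i I' R d e <-> role_i I R d e.
Proof. destruct R; simpl; rewrite same_roles; tauto. Qed.

Lemma lc_i_agree C d :
  (forall B, In B (lc_names C) -> cext I' B = cext I B) ->
  (lc_i I' C d <-> lc_i I C d).
Proof.
  intros same_names; destruct C as [B|R]; simpl.
  - rewrite (same_names B); simpl; tauto.
  - split; intros [e He]; exists e; apply role_i_agree; exact He.
Qed.

Lemma rc_i_agree D d :
  (forall B, In B (rc_names D) -> cext I' B = cext I B) ->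
  (rc_i I' D d <-> rc_i I D d).
Proof.
  intros same_names; destruct D as [B|C|R]; simpl.
  - rewrite (same_names B); simpl; tauto.
  - rewrite (lc_i_agree C d same_names); tauto.
  - split; intros [e He]; exists e; apply role_i_agree; exact He.
Qed.

Lemma inst_agree al es :
  (forall B, In B (ax_cnames al) -> cext I' B = cext I B) ->
  (forall c, In c (ax_inds al) -> ind I' c = ind I c) ->
  (inst I' al es <-> inst I al es).
Proof.
  intros same_names same_inds; destruct al as [C D| | | | |D a|r a b]; simpl in *.
  - destruct es as [|x [|y es]]; try tauto.
    rewrite (lc_i_agree C x), (rc_i_agree D x); try tauto;
      intros B HB; apply same_names, in_or_app; auto.
  - destruct es as [|x [|y [|z es]]]; try tauto; rewrite !role_i_agree; tauto.
  - destruct es as [|x [|y [|z es]]]; try tauto; rewrite !role_i_agree; tauto.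
  - destruct es as [|x [|y [|z es]]]; try tauto; rewrite !role_i_agree; tauto.
  - destruct es as [|x [|y es]]; try tauto; rewrite !role_i_agree; tauto.
  - destruct es; try tauto.
    rewrite same_inds, (rc_i_agree D) by auto; tauto.
  - destruct es; try tauto.
    rewrite same_roles, !same_inds by auto; tauto.
Qed.

Lemma CAS_model_agree K chi :
  (forall B, In B (dkb_cnames K) -> cext I' B = cext I B) ->
  (forall c, In c (dkb_inds K) -> ind I' c = ind I c) ->
  CAS_model K I chi -> CAS_model K I' chi.
Proof.
  intros same_names same_inds [chi_wf [strict_sat defeasible_sat]].
  assert (agree_K : forall i es, In i K ->
            inst I' (item_axiom i) es <-> inst I (item_axiom i) es).
  { intros i es Hi; apply inst_agree; intros x Hx.
    - apply same_names, in_flat_map; eauto.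
    - apply same_inds, in_flat_map; eauto. }
  split; [exact chi_wf | split].
  - intros al Hal es Hlen; apply (agree_K _ _ Hal), strict_sat; assumption.
  - intros al Hal es Hlen Hchi; apply (agree_K _ _ Hal), defeasible_sat; assumption.
Qed.

End Agreement.

Lemma CAS_model_app_strict std (K : DKB) (I : interp std) chi axs :
  CAS_model K I chi -> (forall al, In al axs -> sat I al) ->
  CAS_model (K ++ map Strict axs) I chi.
Proof.
  intros [chi_wf [strict_sat defeasible_sat]] axs_sat.
  split; [exact chi_wf | split].
  - intros al Hal; apply in_app_or in Hal as [Hal|Hal].
    + exact (strict_sat al Hal).
    + apply in_map_iff in Hal as [al' [[= ->] Hal']]; exact (axs_sat al Hal').
  - intros al Hal; apply in_app_or in Hal as [Hal|Hal].
    + exact (defeasible_sat al Hal).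
    + apply in_map_iff in Hal as [? [? _]]; discriminate.
Qed.

Lemma in_combine_l_inv {X Y : Type} (xs : list X) (ys : list Y) x :
  length xs = length ys -> In x xs -> exists y, In (x, y) (combine xs ys).
Proof.
  revert ys; induction xs as [|a xs IH]; intros [|b ys] Hlen Hx; try easy.
  destruct Hx as [<-|Hx].
  - exists b; left; reflexivity.
  - destruct (IH ys) as [y Hy]; auto.
    exists y; right; exact Hy.
Qed.

Theorem proposition10 (std : NI -> Prop)
  (Hinf : forall n : nat, exists x, n <= x /\ std x)
  (K : DKB) (I : interp std) (chi : CA std -> Prop)
  (HM : CAS_model K I chi)
  (es : list (dom std)) (Hes : NoDup es)
  (Huni : forall e, uni K I chi e <-> In e es)
  (cs : list NI) (A : NC)
  (Hlen : length cs = length es) (Hcs : NoDup cs)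
  (Hfresh_c : forall c, In c cs -> ~ In c (dkb_inds K) /\ ~ std c)
  (Hfresh_A : ~ In A (dkb_cnames K))
  (I' : interp std)
  (Hind : forall c, ~ In c cs -> ind I' c = ind I c)
  (Hci : forall c e, In (c, e) (combine cs es) -> ind I' c = e)
  (Hconc : forall B, B <> A -> cext I' B = cext I B)
  (HA : forall d, cext I' A d <-> In d es)
  (Hrole : rext I' = rext I) :
  CAS_model (extend_dkb K A cs) I' chi.
Proof.
  unfold extend_dkb; rewrite <- (map_map (fun c => CAss (RAt A) c) Strict).
  apply CAS_model_app_strict.
  - apply (CAS_model_agree I I' Hrole); [| | exact HM].
    + intros B HB; apply Hconc; intros ->; exact (Hfresh_A HB).
    + intros c Hc; apply Hind; intros Hc'; exact (proj1 (Hfresh_c c Hc') Hc).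
  - intros al Hal; apply in_map_iff in Hal as [c [<- Hc]].
    intros [|] Hl; [simpl | discriminate].
    destruct (in_combine_l_inv cs es c Hlen Hc) as [e He].
    apply HA; rewrite (Hci c e He); exact (in_combine_r _ _ _ _ He).
Qed.
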